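(* Let $\mathcal P\subset\mathbb R^n$ be an $n$-dimensional convex polytope and consider $\dot x=Ax+a+Bu$, $x\in\mathcal P$, with $\operatorname{rank}(B)=n-1$, $(A,B)$ controllable and $\operatorname{int}\mathcal P\cap\mathcal O=\emptyset$. Let $z\in\mathcal P$. Then the sets $\{x\in\mathcal P:\beta^Tx\le\beta^Tz\}$ and $\{x\in\mathcal P:\beta^Tx<\beta^Tz\}$ are $\mathcal P$-invariant.
   Context: $\mathcal B=\operatorname{Im}(B)$, $\mathcal O=\{x:Ax+a\in\mathcal B\}$; $\beta$ is the unit normal to $\mathcal B$ with $\beta^T(Ax+a)\le0$ for all $x\in\mathcal P$. Controls are piecewise continuous; $\phi^u_t(x_0)$ is the solution from $x_0$. A set $\mathcal A\subseteq\mathcal P$ is $\mathcal P$-invariant if for every $x_0\in\mathcal A$ and every piecewise continuous $u$, every trajectory $\phi^u_t(x_0)$ that lies in $\mathcal P$ on an interval $[0,T]$ ($T<\infty$) or $[0,\infty)$ lies in $\mathcal A$ on the same interval. *)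

From HB Require Import structures.
From mathcomp Require Import all_boot all_order all_algebra.
From mathcomp Require Import all_classical all_reals topology normedtype derive.
Set Implicit Arguments. Unset Strict Implicit. Unset Printing Implicit Defensive.
Import Order.TTheory GRing.Theory Num.Theory.
Import numFieldNormedType.Exports.
Local Open Scope classical_set_scope.
Local Open Scope ring_scope.

Section Defs.
Variable R : realType.

Definition dotv n (u v : 'cV[R]_n) : R := (u^T *m v) 0 0.

Definition halfspaces n k (H : 'M[R]_(k, n)) (h : 'cV[R]_k) : set 'cV[R]_n :=
  [set x | forall i, (H *m x) i 0 <= h i 0].

(* interior point (box neighbourhoods; equivalent to Euclidean balls) *)
Definition int_pt n (S : set 'cV[R]_n) (x : 'cV[R]_n) : Prop :=
  exists2 e : R, 0 < e &
    forall y : 'cV[R]_n, (forall i, `|y i 0 - x i 0| < e) -> S y.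

Definition full_dim_polytope n (P : set 'cV[R]_n) : Prop :=
  [/\ exists k (H : 'M[R]_(k, n)) (h : 'cV[R]_k), P = halfspaces H h,
      exists M : R, forall x, P x -> forall i, `|x i 0| <= M
    & exists x, int_pt P x].

Definition in_Im n m (B : 'M[R]_(n, m)) (y : 'cV[R]_n) : Prop :=
  exists v : 'cV[R]_m, y = B *m v.

Definition controllable n m (A : 'M[R]_n) (B : 'M[R]_(n, m)) : Prop :=
  \rank (\mxrow_(i < n) (A ^+ i *m B)) = n.

Definition pw_continuous m (u : R -> 'cV[R]_m) : Prop :=
  forall T : R, exists D : seq R,
    (forall t, 0 <= t <= T -> t \notin D ->
       forall j, {for t, continuous (fun s => u s j 0)}) /\
    (forall t, t \in D -> forall j,
       (0 < t -> cvg ((fun s => u s j 0) @ t^'-)) /\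
       cvg ((fun s => u s j 0) @ t^'+)).

(* x is the solution of  x' = A x + a + B u,  x(0) = x0, on [0, +oo):
   x is continuous on [0,+oo) and satisfies the ODE at every t > 0 at which
   u is continuous (Caratheodory solution for piecewise continuous u). *)
Definition is_traj n m (A : 'M[R]_n) (a : 'cV[R]_n) (B : 'M[R]_(n, m))
    (u : R -> 'cV[R]_m) (x0 : 'cV[R]_n) (x : R -> 'cV[R]_n) : Prop :=
  [/\ x 0 = x0,
      forall i, {within [set t : R | 0 <= t], continuous (fun s => x s i 0)}
    & forall t, 0 < t -> (forall j, {for t, continuous (fun s => u s j 0)}) ->
        forall i, is_derive t 1 (fun s => x s i 0) ((A *m x t + a + B *m u t) i 0)].

Definition P_invariant n m (A : 'M[R]_n) (a : 'cV[R]_n) (B : 'M[R]_(n, m))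
    (P S : set 'cV[R]_n) : Prop :=
  S `<=` P /\
  forall (x0 : 'cV[R]_n) (u : R -> 'cV[R]_m) (x : R -> 'cV[R]_n),
    S x0 -> pw_continuous u -> is_traj A a B u x0 x ->
    (forall T : R, 0 <= T -> (forall t, 0 <= t <= T -> P (x t)) ->
       forall t, 0 <= t <= T -> S (x t)) /\
    ((forall t, 0 <= t -> P (x t)) -> forall t, 0 <= t -> S (x t)).

End Defs.

From HB Require Import structures.
From mathcomp Require Import all_boot all_order all_algebra.
From mathcomp Require Import all_classical all_reals topology normedtype derive.
Set Implicit Arguments.
Unset Strict Implicit.
Unset Printing Implicit Defensive.
Import Order.TTheory GRing.Theory Num.Theory.
Import numFieldNormedType.Exports.
Local Open Scope classical_set_scope.
Local Open Scope ring_scope.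

(* Since beta is orthogonal to Im B, the control drops out of the derivative
   of t |-> beta^T x(t), which is therefore beta^T (A x(t) + a) <= 0 while
   x(t) stays in P. A trajectory that stays in P thus has beta^T x
   nonincreasing (the finitely many discontinuities of u only cost a finite
   subdivision of the time interval), so it cannot leave either sublevel set. *)

Lemma nincr_of_derive_le0_off_seq (R : realType) (g dg : R -> R) (D : seq R)
    (a b : R) :
  a <= b -> {within `[a, b], continuous g} ->
  (forall s, s \in `]a, b[%R -> s \notin D -> is_derive s 1 g (dg s) /\ dg s <= 0) ->
  g b <= g a.
Proof.
elim: D a b => [|d D IH] a b ab cg hd.
  case: (ltgtP a b) ab => // [altb|<-] _; last by [].
  have [c cab gba] := MVT altb (fun s hs => (hd s hs isT).1) cg.
  rewrite -subr_le0 gba; apply: mulr_le0_ge0; first exact: (hd c cab isT).2.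
  by rewrite subr_ge0 ltW.
have hd' s : s \in `]a, b[%R -> s != d -> s \notin D ->
    is_derive s 1 g (dg s) /\ dg s <= 0.
  by move=> sab sd sD; apply: hd; rewrite // in_cons negb_or sd.
have [dab|/negP dNab] := boolP (d \in `]a, b[%R); last first.
  by apply: IH => // s sab; apply: hd' => //; apply/eqP => sd; rewrite -sd in dNab.
have ad : a <= d by rewrite ltW // (itvP dab).
have db : d <= b by rewrite ltW // (itvP dab).
have cg_sub c e : a <= c -> e <= b -> {within `[c, e], continuous g}.
  by move=> ac eb; apply: continuous_subspaceW cg; apply: subset_itv; rewrite bnd_simp.
apply: (@le_trans _ _ (g d)).
  apply: IH db (cg_sub _ _ ad (lexx b)) _ => s sdb sD.
  have as_ : a < s by rewrite (le_lt_trans ad) // (itvP sdb).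
  apply: hd' => //; first by rewrite in_itv /= as_ (itvP sdb).
  by rewrite gt_eqF // (itvP sdb).
apply: IH ad (cg_sub _ _ (lexx a) db) _ => s sad sD.
have sb : s < b by rewrite (lt_le_trans _ db) // (itvP sad).
apply: hd' => //; first by rewrite in_itv /= sb (itvP sad).
by rewrite lt_eqF // (itvP sad).
Qed.

Lemma dotvE (R : realType) n (u v : 'cV[R]_n) :
  dotv u v = \sum_(j < n) u j 0 * v j 0.
Proof. by rewrite /dotv mxE; apply: eq_bigr => j _; rewrite mxE. Qed.

Section DotTrajectory.
Variables (R : realType) (n m : nat).
Variables (A : 'M[R]_n) (a : 'cV[R]_n) (B : 'M[R]_(n, m)) (beta : 'cV[R]_n).
Variables (u : R -> 'cV[R]_m) (x0 : 'cV[R]_n) (x : R -> 'cV[R]_n).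
Hypothesis x_traj : is_traj A a B u x0 x.

Let dotv_traj_sumE :
  (fun s => dotv beta (x s)) = \sum_(j < n) (fun s => beta j 0 * x s j 0).
Proof. by rewrite fct_sumE; apply: funext => s; rewrite dotvE. Qed.

Lemma continuous_dotv_traj :
  {within [set t : R | 0 <= t], continuous (fun s => dotv beta (x s))}.
Proof.
have [_ cx _] := x_traj.
rewrite dotv_traj_sumE; elim/big_ind: _.
- by move=> s; apply: cvg_cst.
- by move=> f1 f2 c1 c2 s; apply: continuousD; [exact: c1|exact: c2].
- by move=> j _ s; apply: continuousM; [exact: cvg_cst|exact: cx].
Qed.

Lemma is_derive_dotv_traj t :
  beta^T *m B = 0 -> 0 < t ->
  (forall j, {for t, continuous (fun s => u s j 0)}) ->
  is_derive t 1 (fun s => dotv beta (x s)) (dotv beta (A *m x t + a)).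
Proof.
move=> hB t0 uc; have [_ _ dx] := x_traj.
have -> : dotv beta (A *m x t + a) = dotv beta (A *m x t + a + B *m u t).
  by rewrite /dotv [in RHS]mulmxDr mulmxA hB mul0mx addr0.
rewrite dotv_traj_sumE dotvE; apply: is_derive_sum => j.
exact: is_deriveZ (dx t t0 uc j).
Qed.

Lemma dotv_traj_le (P : set 'cV[R]_n) T t :
  beta^T *m B = 0 -> (forall y, P y -> dotv beta (A *m y + a) <= 0) ->
  pw_continuous u -> (forall s, 0 <= s <= T -> P (x s)) ->
  0 <= t <= T -> dotv beta (x t) <= dotv beta x0.
Proof.
move=> hB hP pu hin /andP[t0 tT].
have [D [uc _]] := pu T; have [<- _ _] := x_traj.
apply: (@nincr_of_derive_le0_off_seq _ (fun s => dotv beta (x s))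
  (fun s => dotv beta (A *m x s + a)) D 0 t t0).
  apply: continuous_subspaceW continuous_dotv_traj.
  by move=> s /=; rewrite in_itv /= => /andP[].
move=> s st sD; have s0 : 0 < s by rewrite (itvP st).
have sT : s <= T by rewrite (le_trans _ tT) // ltW // (itvP st).
have s_range : 0 <= s <= T by rewrite ltW ?sT.
split; first by apply: is_derive_dotv_traj => //; exact: uc.
exact/hP/hin.
Qed.

End DotTrajectory.

Lemma P_invariant_finite_horizon (R : realType) n m (A : 'M[R]_n) (a : 'cV[R]_n)
    (B : 'M[R]_(n, m)) (P S : set 'cV[R]_n) :
  S `<=` P ->
  (forall x0 u x, S x0 -> pw_continuous u -> is_traj A a B u x0 x ->
     forall T, 0 <= T -> (forall t, 0 <= t <= T -> P (x t)) ->
     forall t, 0 <= t <= T -> S (x t)) ->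
  P_invariant A a B P S.
Proof.
move=> SP hS; split=> // x0 u x Sx0 pu tr.
split=> [|hin t t0]; first exact: hS Sx0 pu tr.
apply: (hS _ _ _ Sx0 pu tr t t0 _ t); last by rewrite t0 /=.
by move=> s /andP[s0 _]; apply: hin.
Qed.

Lemma P_invariant_dotv_sublevel (R : realType) n m (P : set 'cV[R]_n)
    (A : 'M[R]_n) (a : 'cV[R]_n) (B : 'M[R]_(n, m)) (beta : 'cV[R]_n)
    (Q : R -> Prop) :
  beta^T *m B = 0 -> (forall y, P y -> dotv beta (A *m y + a) <= 0) ->
  (forall r r', r <= r' -> Q r' -> Q r) ->
  P_invariant A a B P [set y | P y /\ Q (dotv beta y)].
Proof.
move=> hB hP Q_down; apply: P_invariant_finite_horizon => [y []//|].
move=> x0 u x [_ Qx0] pu tr T _ hin t tT; split; first exact: hin.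
exact: Q_down (dotv_traj_le tr hB hP pu hin tT) Qx0.
Qed.

Theorem lemma2 (R : realType) (n m : nat) (P : set 'cV[R]_n)
    (A : 'M[R]_n) (a : 'cV[R]_n) (B : 'M[R]_(n, m)) (beta z : 'cV[R]_n) :
  full_dim_polytope P ->
  \rank B = n.-1 ->
  controllable A B ->
  (forall x, int_pt P x -> ~ in_Im B (A *m x + a)) ->
  beta^T *m B = 0 ->
  dotv beta beta = 1 ->
  (forall x, P x -> dotv beta (A *m x + a) <= 0) ->
  P z ->
  P_invariant A a B P [set x | P x /\ dotv beta x <= dotv beta z] /\
  P_invariant A a B P [set x | P x /\ dotv beta x < dotv beta z].
Proof.
move=> _ _ _ _ hB _ hP _; split.
- apply: (P_invariant_dotv_sublevel (Q := fun r => r <= dotv beta z)) => //.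
  by move=> r r' rr' r'z; exact: le_trans rr' r'z.
- apply: (P_invariant_dotv_sublevel (Q := fun r => r < dotv beta z)) => //.
  by move=> r r' rr' r'z; exact: le_lt_trans rr' r'z.
Qed.
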